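(* Let $m\ge1$, $\Sigma=\{1,\ldots,m\}$, and let $\mu:\Sigma^*\to\Sigma^*$ be a morphism with $\mu(1)=1x$ for some $x\in\Sigma^+$, $|\mu(a)|>1$ for all $a\in\Sigma$, and frequency matrix $M$ non-singular with $|M^{-1}|<1$. Let $N=\max_{a\in\Sigma}|\mu(a)|$, let $k$ be a positive integer, and let $t_1=[a_1,\ldots,a_{k+1},d_1,\ldots,d_{k-1}]$ be a $k$-template with $\Delta=\lfloor\max_i|d_i|\rfloor$ (Euclidean norm). Suppose that $\mathcal I$ is a factor of $\mu^\omega(1)$ which is an instance of $t_1$ and $|\mathcal I|>N+k-1+(k-1)[N-2+mk\Delta]$. Then for some parent $t_2$ of $t_1$, $\mu^\omega(1)$ contains a factor $\mathcal J$ which is an instance of $t_2$ and satisfies $|\mathcal J|<|\mathcal I|$.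
   Context: $\mu^\omega(1)$ denotes the infinite fixed point of $\mu$ beginning with $1$ (the limit of $\mu^n(1)$). The Parikh map $\psi:\Sigma^*\to\mathbb{Z}^m$ is $\psi(w)=[|w|_1,\ldots,|w|_m]$ (row vector). The frequency matrix $M$ of $\mu$ has $M_{i,j}=|\mu(i)|_j$. For a real matrix $A$, $|A|=\sup_{v\neq0}|vA|/|v|$ with Euclidean norm on row vectors. A $k$-template is a $2k$-tuple $t=[a_1,\ldots,a_{k+1},d_1,\ldots,d_{k-1}]$ with each $a_i\in\{\epsilon,1,\ldots,m\}$ ($\epsilon$ the empty word) and each $d_i\in\mathbb{Z}^m$. A non-empty word $\mathcal I$ is an instance of $t$ if $\mathcal I=a_1X_1a_2X_2\cdots a_kX_ka_{k+1}$ for words $X_i$ with $\psi(X_{i+1})-\psi(X_i)=d_i$ for $i=1,\ldots,k-1$. Given $k$-templates $t_1=[a_1,\ldots,a_{k+1},d_1,\ldots,d_{k-1}]$ and $t_2=[A_1,\ldots,A_{k+1},D_1,\ldots,D_{k-1}]$, $t_2$ is a parent of $t_1$ if there are words $a_i',a_i''$ ($1\le i\le k+1$) with $\mu(A_i)=a_i'a_ia_i''$ for each $i$ and $\psi(a_{i+1}''a_{i+2}')-\psi(a_i''a_{i+1}')+D_iM=d_i$ for $1\le i\le k-1$. *)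

From HB Require Import structures.
From mathcomp Require Import all_boot all_order all_algebra.
From mathcomp Require Import classical_sets reals.
Set Implicit Arguments. Unset Strict Implicit. Unset Printing Implicit Defensive.
Import Order.TTheory GRing.Theory Num.Theory.
Local Open Scope ring_scope.

(* Alphabet Sigma = {1,...,m} is encoded as 'I_m; letter "1" is ord 0. *)
Definition letter1 (m : nat) (hm : (0 < m)%N) : 'I_m := Ordinal hm.

Definition morph (m : nat) (mu : 'I_m -> seq 'I_m) (w : seq 'I_m) : seq 'I_m :=
  flatten (map mu w).

Definition mu_pow (m : nat) (mu : 'I_m -> seq 'I_m) (n : nat) (w : seq 'I_m) :=
  iter n (morph mu) w.

(* The infinite fixed point mu^omega(1) as a function nat -> letters:
   its i-th letter (0-indexed) is the i-th letter of mu^(i+1)(1)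
   (under the hypotheses mu(1) = 1x and |mu(a)| > 1, |mu^n(1)| > n and
   mu^n(1) is a prefix of mu^(n+1)(1)). *)
Definition fixpt (m : nat) (hm : (0 < m)%N) (mu : 'I_m -> seq 'I_m) (i : nat)
  : 'I_m := nth (letter1 hm) (mu_pow mu i.+1 [:: letter1 hm]) i.

Definition factor_of (m : nat) (w : nat -> 'I_m) (u : seq 'I_m) : Prop :=
  exists p : nat, u = [seq w (p + j)%N | j <- iota 0 (size u)].

Definition parikh (m : nat) (w : seq 'I_m) : 'rV[int]_m :=
  \row_(j < m) (count_mem j w)%:Z.

Definition freq_mx (m : nat) (mu : 'I_m -> seq 'I_m) : 'M[int]_m :=
  \matrix_(i < m, j < m) (count_mem j (mu i))%:Z.

Definition vnorm (R : realType) (m : nat) (v : 'rV[R]_m) : R :=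
  Num.sqrt (\sum_(j < m) v 0 j ^+ 2).

Definition opnorm (R : realType) (m : nat) (A : 'M[R]_m) : R :=
  sup [set (vnorm (v *m A)) / vnorm v | v in [set v : 'rV[R]_m | v != 0]].

Definition lw (m : nat) (o : option 'I_m) : seq 'I_m :=
  if o is Some c then [:: c] else [::].

(* A k-template t = [a_1,...,a_{k+1}, d_1,...,d_{k-1}] is represented by
   a : nat -> option 'I_m and d : nat -> 'rV[int]_m, only the values at
   indices 1..k+1 (resp. 1..k-1) being relevant. *)
Definition instance (m k : nat) (a : nat -> option 'I_m) (d : nat -> 'rV[int]_m)
  (I : seq 'I_m) : Prop :=
  I != [::] /\
  exists X : nat -> seq 'I_m,
    I = flatten [seq lw (a i) ++ X i | i <- iota 1 k] ++ lw (a k.+1) /\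
    forall i, (1 <= i)%N -> (i <= k.-1)%N -> parikh (X i.+1) - parikh (X i) = d i.

Definition parent (m k : nat) (mu : 'I_m -> seq 'I_m)
  (a : nat -> option 'I_m) (d : nat -> 'rV[int]_m)
  (A : nat -> option 'I_m) (D : nat -> 'rV[int]_m) : Prop :=
  exists a' a'' : nat -> seq 'I_m,
    (forall i, (1 <= i)%N -> (i <= k.+1)%N ->
       morph mu (lw (A i)) = a' i ++ lw (a i) ++ a'' i) /\
    (forall i, (1 <= i)%N -> (i <= k.-1)%N ->
       parikh (a'' i.+1 ++ a' i.+2) - parikh (a'' i ++ a' i.+1)
         + D i *m freq_mx mu = d i).

(* Delta = floor (max_i |d_i|), max over i = 1..k-1 (0 if k = 1) *)
Definition Delta (R : realType) (m k : nat) (d : nat -> 'rV[int]_m) : int :=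
  Num.floor (\big[Num.max/0]_(1 <= i < k) vnorm (map_mx (fun z : int => z%:~R : R) (d i))).

From HB Require Import structures.
From mathcomp Require Import all_boot all_order all_algebra.
From mathcomp Require Import classical_sets reals.
From mathcomp Require Import boolp zify ring.
Import Order.TTheory GRing.Theory Num.Theory.
Local Open Scope ring_scope.

Set Implicit Arguments. Unset Strict Implicit.

(* Write I as a factor of W = mu(V) with V = mu^n(1), so that W is cut into
   the blocks mu(v) of the letters v of V.  Each a_i of the template occupies
   an interval of length at most 1 of W, covered by the image of a factor A_i
   of V of length at most 1 (empty when a_i is empty and sits on a block
   boundary).  When every gap X_i has length at least N - 1, the A_i are
   disjoint and in order, so X_i = a''_i mu(Y_i) a'_{i+1} for the factor Y_i
   of V between A_i and A_{i+1}.  Then J = A_1 Y_1 ... A_k Y_k A_{k+1} is an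
   instance of the parent [A_1, ..., A_{k+1}, psi(Y_2) - psi(Y_1), ...], and
   |J| < |I| because every letter has an image of length at least 2.  The gaps
   are long: |X_i| and |X_{i+1}| differ by at most m Delta, so a gap shorter
   than N - 1 would make |I| smaller than the assumed bound. *)

Section Slices.
Local Open Scope nat_scope.
Variable T : Type.
Implicit Types (w u x y : seq T).

Definition slice w i j := drop i (take j w).

Lemma size_slice w i j : j <= size w -> size (slice w i j) = j - i.
Proof. by move=> h; rewrite /slice size_drop size_takel. Qed.

Lemma slice_nil w i : slice w i i = [::].
Proof. by rewrite /slice drop_oversize // size_take_min geq_minl. Qed.

Lemma take_slice w i j : i <= j -> take j w = take i w ++ slice w i j.
Proof. by move=> hij; rewrite -{1}(cat_take_drop i (take j w)) take_takel. Qed.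

Lemma slice_cat w i j l : i <= j -> j <= l -> l <= size w ->
  slice w i j ++ slice w j l = slice w i l.
Proof.
move=> hij hjl hl; rewrite {3}/slice (take_slice w hjl) drop_cat size_takel; last by lia.
case: ltnP => // hji; have <- : i = j by lia.
by rewrite subnn drop0 slice_nil.
Qed.

Lemma slice_cat3 w i j l n : i <= j -> j <= l -> l <= n -> n <= size w ->
  slice w i j ++ slice w j l ++ slice w l n = slice w i n.
Proof. by move=> hij hjl hln hn; rewrite !slice_cat //; lia. Qed.

Lemma slice_mid u x y : slice (u ++ x ++ y) (size u) (size u + size x) = x.
Proof. by rewrite /slice catA take_size_cat ?size_cat // drop_size_cat. Qed.

End Slices.

Lemma lw_ohead (m : nat) (w : seq 'I_m) : (size w <= 1)%N -> lw (ohead w) = w.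
Proof. by case: w => [|c [|]]. Qed.

Lemma size_lw (m : nat) (o : option 'I_m) : (size (lw o) <= 1)%N.
Proof. by case: o. Qed.

Section Blocks.
Local Open Scope nat_scope.
Variables (m : nat) (mu : 'I_m -> seq 'I_m).
Implicit Types (V u v : seq 'I_m).

Lemma morph_cat u v : morph mu (u ++ v) = morph mu u ++ morph mu v.
Proof. by rewrite /morph map_cat flatten_cat. Qed.

Definition blockpos V j := size (morph mu (take j V)).

Lemma blockpos0 V : blockpos V 0 = 0.
Proof. by rewrite /blockpos take0. Qed.

Lemma blockpos_mono V i j : i <= j -> blockpos V i <= blockpos V j.
Proof. by move=> h; rewrite /blockpos (take_slice V h) morph_cat size_cat leq_addr. Qed.

Lemma blockpos_le_size V j : blockpos V j <= size (morph mu V).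
Proof. by rewrite /blockpos -{2}(cat_take_drop j V) morph_cat size_cat leq_addr. Qed.

Lemma blockpos_oversize V j : size V <= j -> blockpos V j = size (morph mu V).
Proof. by move=> h; rewrite /blockpos take_oversize. Qed.

Lemma blockposS x0 V j : j < size V ->
  blockpos V j.+1 = blockpos V j + size (mu (nth x0 V j)).
Proof.
by move=> h; rewrite /blockpos (take_nth x0 h) -cats1 morph_cat size_cat /morph /= cats0.
Qed.

Lemma slice_morph V i j : i <= j -> j <= size V ->
  morph mu (slice V i j) = slice (morph mu V) (blockpos V i) (blockpos V j).
Proof.
move=> hij hj; have Ej := take_slice V hij.
have {2}-> : V = take i V ++ slice V i j ++ drop j V by rewrite catA -Ej cat_take_drop.
by rewrite /blockpos Ej !morph_cat size_cat slice_mid.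
Qed.

Lemma exists_block V q : q < size (morph mu V) ->
  exists2 c, c < size V & blockpos V c <= q < blockpos V c.+1.
Proof.
suff H j : q < blockpos V j -> exists2 c, c < j & blockpos V c <= q < blockpos V c.+1.
  by move=> hq; apply: H; rewrite blockpos_oversize.
elim: j => [|j IH] hq; first by rewrite blockpos0 in hq.
case: (ltnP q (blockpos V j)) => h; last by exists j; rewrite ?h.
by have [c hc hcq] := IH h; exists c => //; apply: ltnW.
Qed.
End Blocks.

Section Covers.
Local Open Scope nat_scope.
Variables (m : nat) (mu : 'I_m -> seq 'I_m) (N : nat) (V : seq 'I_m).
Hypothesis hlen : forall c, 1 < size (mu c).
Hypothesis hN : forall c, size (mu c) <= N.
Local Notation B := (blockpos mu V).

Lemma blockpos_ge2 x y : x <= y -> y <= size V -> B x + 2 * (y - x) <= B y.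
Proof.
move=> hxy; elim: y hxy => [|y IH] hxy hy.
  have -> : x = 0 by lia.
  by rewrite addn0.
case: (ltnP y x) => h.
  have -> : x = y.+1 by lia.
  by rewrite subnn addn0.
case: V hy IH => [//|c0 V'] hy IH.
by rewrite (blockposS mu c0 hy); have := IH h (ltnW hy); have := hlen (nth c0 (c0 :: V') y); lia.
Qed.

Lemma blockpos_lt x y : x < y -> y <= size V -> B x < B y.
Proof. by move=> h1 h2; have := blockpos_ge2 (ltnW h1) h2; lia. Qed.

Lemma blockposS_le c : B c.+1 <= B c + N.
Proof.
case: (ltnP c (size V)) => h; last by rewrite !blockpos_oversize //; lia.
by case: V h => [//|c0 V'] h; rewrite (blockposS mu c0 h) leq_add2l.
Qed.

(* The factor V[c, c') of V is the tightest one whose image covers the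
   interval [s, e) of mu(V); an empty interval strictly inside the image of a
   letter is covered by that letter. *)
Definition covers s e c c' :=
  [/\ c' <= size V, B c <= s <= e, e <= B c'
    & c' = c \/ [/\ c' = c.+1, B c < e & s < B c']].

Lemma cover_le s e c c' : covers s e c c' -> c <= c' <= c.+1 /\ c' <= size V.
Proof. by case=> h _ _ [E|[E _ _]]; subst; split; lia. Qed.

Lemma exists_cover s e : s <= e <= s.+1 -> e <= size (morph mu V) ->
  exists c c', covers s e c c'.
Proof.
move=> hse he; case: (ltnP s (size (morph mu V))) => hs; last first.
  by exists (size V), (size V); rewrite /covers blockpos_oversize //; split; [lia|lia|lia|left].
have [c hc /andP [hc1 hc2]] := exists_block hs.
have [/andP [/eqP hes /eqP hcs]|] := boolP ((e == s) && (B c == s)).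
  by exists c, c; split; [lia|lia|lia|left].
rewrite negb_and => /orP hne; exists c, c.+1.
by split; [lia|lia|lia|right; split; case: hne => /eqP; lia].
Qed.

Lemma cover_ordered s1 e1 c1 c1' s2 e2 c2 c2' :
  covers s1 e1 c1 c1' -> covers s2 e2 c2 c2' -> 0 < N -> e1 + N <= s2.+1 -> c1' <= c2.
Proof.
move=> hc1 hc2 hN0 hs; case: (leqP c1' c2) => // hlt.
have [/andP [l1 l1'] l2] := cover_le hc1; have [/andP [l3 l3'] l4] := cover_le hc2.
have m1 : B c2' <= B c1' by apply: blockpos_mono; lia.
have m2 : B c1' <= B c1 + N.
  by apply: leq_trans (blockposS_le c1); apply: blockpos_mono; lia.
have m3 : B c2 <= B c1 by apply: blockpos_mono; lia.
have m4 : c2 < c1 -> B c2 < B c1 by move=> h; apply: blockpos_lt; lia.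
case: hc1 hc2 => _ /andP [h3 h3'] h4 [E1|[E1 h5 h5']] [_ /andP [g3 g3'] g4 [E2|[E2 g5 g5']]];
  subst; lia.
Qed.

Lemma cover_span p q e1 c1 c1' s2 c2 c2' :
  covers p e1 c1 c1' -> covers s2 q c2 c2' -> c1' <= c2 -> 3 <= q - p ->
  0 < c2' - c1 < q - p.
Proof.
move=> hc1 hc2 hc hpq.
have [/andP [l1 l1'] l2] := cover_le hc1; have [/andP [l3 l3'] l4] := cover_le hc2.
have ht : c1 < c2'.
  case: (ltnP c1 c2') => // h; have := blockpos_mono mu V h.
  by case: hc1 hc2 => _ /andP [h1 _] _ _ [_ _ g2 _]; lia.
have hs : p < B c1.+1.
  case: hc1 => _ /andP [h1 h2] h3 [E|[E _ h4]]; subst => //.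
  by have := blockpos_lt (ltnSn c1) (leq_trans ht l4); lia.
have he : B c2'.-1 < q.
  case: hc2 => _ /andP [g1 g2] g3 [E|[E g4 _]]; subst => //.
  by have := @blockpos_lt c2.-1 c2 ltac:(lia) l4; lia.
case: (leqP (c2' - c1) 2) => h; first lia.
by have := @blockpos_ge2 c1.+1 c2'.-1 ltac:(lia) ltac:(lia); lia.
Qed.
End Covers.

Lemma flatten_iotaS (T : Type) (f : nat -> seq T) k :
  flatten [seq f i | i <- iota 1 k.+1] = flatten [seq f i | i <- iota 1 k] ++ f k.+1.
Proof. by rewrite -[k.+1]addn1 iotaD map_cat flatten_cat /= cats0 add1n addn1. Qed.

Lemma instance_positions (T : Type) (k : nat) (a X : nat -> seq T) (u I v : seq T) :
  I = flatten [seq a i ++ X i | i <- iota 1 k] ++ a k.+1 ->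
  let w := u ++ I ++ v in
  exists s e : nat -> nat,
    [/\ s 1%N = size u, e k.+1 = (size u + size I)%N,
        forall i, (1 <= i <= k.+1)%N -> (s i <= e i)%N /\ slice w (s i) (e i) = a i
      & forall i, (1 <= i <= k)%N -> (e i <= s i.+1)%N /\ slice w (e i) (s i.+1) = X i].
Proof.
elim: k v I => [|k IH] v I -> w.
  exists (fun=> size u), (fun=> size u + size (a 1%N))%N; split=> // [i|i]; last by lia.
  move=> hi; have -> : i = 1%N by lia.
  by rewrite leq_addr slice_mid.
set I' := flatten [seq a i ++ X i | i <- iota 1 k] ++ a k.+1.
have [s [e [hs1 hek hlet hgap]]] := IH (X k.+1 ++ a k.+2 ++ v) I' erefl.
have Ew : w = u ++ I' ++ X k.+1 ++ a k.+2 ++ v.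
  by rewrite /w /I' flatten_iotaS -!catA.
pose s' i := if i == k.+2 then (e k.+1 + size (X k.+1))%N else s i.
pose e' i := if i == k.+2 then (e k.+1 + size (X k.+1) + size (a k.+2))%N else e i.
exists s', e'; split.
- by rewrite /s' hs1.
- by rewrite /e' eqxx hek /I' flatten_iotaS !size_cat; lia.
- move=> i hi; rewrite /s' /e'; case: eqP => [->|/eqP hik]; last by rewrite Ew; apply: hlet; lia.
  have -> : w = ((u ++ I') ++ X k.+1) ++ a k.+2 ++ v by rewrite Ew !catA.
  by rewrite leq_addr hek -(size_cat u) -size_cat slice_mid.
- move=> i hi; rewrite /s' /e' ifN; last by lia.
  case: (eqVneq i k.+1) => [->|hik]; last by rewrite ifN ?Ew; [apply: hgap|]; lia.
  by rewrite eqxx leq_addr Ew catA hek -size_cat slice_mid.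
Qed.

Section FixedPoint.
Local Open Scope nat_scope.
Variables (m : nat) (hm : 0 < m) (mu : 'I_m -> seq 'I_m).
Hypothesis hlen : forall c, 1 < size (mu c).
Hypothesis hmu1 : exists x, mu (letter1 hm) = letter1 hm :: x.

Definition fixprefix n := mu_pow mu n [:: letter1 hm].

Lemma fixprefixS n : fixprefix n.+1 = morph mu (fixprefix n).
Proof. by rewrite /fixprefix /mu_pow iterS. Qed.

Lemma fixprefix_prefixS n : prefix (fixprefix n) (fixprefix n.+1).
Proof.
elim: n => [|n /prefixP [r IH]].
  by have [x hx] := hmu1; rewrite fixprefixS /fixprefix /= /morph /= hx /= prefix0s.
by rewrite (fixprefixS n.+1) IH morph_cat -fixprefixS -IH prefix_prefix.
Qed.

Lemma fixprefix_mono : {homo fixprefix : n n' / n <= n' >-> prefix n n'}.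
Proof.
by apply: homo_leq; [exact: prefix_refl | exact: prefix_trans | exact: fixprefix_prefixS].
Qed.

Lemma size_fixprefix n : n < size (fixprefix n).
Proof.
elim: n => [//|n IH]; rewrite fixprefixS.
have := blockpos_ge2 hlen (leq0n (size (fixprefix n))) (leqnn _).
by rewrite blockpos0 blockpos_oversize //; lia.
Qed.

Lemma fixpt_nth n i : i < size (fixprefix n) ->
  fixpt hm mu i = nth (letter1 hm) (fixprefix n) i.
Proof.
have nth_pref n' j : n' <= maxn n i.+1 -> j < size (fixprefix n') ->
    nth (letter1 hm) (fixprefix (maxn n i.+1)) j = nth (letter1 hm) (fixprefix n') j.
  by move=> /fixprefix_mono /prefixP [r ->] hj; rewrite nth_cat hj.
move=> hi; rewrite /fixpt -/(fixprefix i.+1).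
rewrite -(nth_pref i.+1) ?leq_maxr ?(nth_pref n) ?leq_maxl //.
exact: ltnW (size_fixprefix i.+1).
Qed.

Lemma factor_slice n i j : j <= size (fixprefix n) ->
  factor_of (fixpt hm mu) (slice (fixprefix n) i j).
Proof.
move=> hj; exists i; apply: (@eq_from_nth _ (letter1 hm)); first by rewrite size_map size_iota.
move=> t; rewrite size_slice // => ht.
rewrite (nth_map 0) ?size_iota ?size_slice // nth_iota ?size_slice // add0n.
by rewrite (fixpt_nth (n := n)) /slice ?nth_drop ?nth_take //; lia.
Qed.

Lemma factor_fixprefix I : factor_of (fixpt hm mu) I ->
  exists n u v, fixprefix n.+1 = u ++ I ++ v.
Proof.
case=> p hI; set W := fixprefix (p + size I).+1.
have hW : p + size I <= size W by have := size_fixprefix (p + size I).+1; rewrite -/W; lia.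
have EI : I = slice W p (p + size I).
  apply: (@eq_from_nth _ (letter1 hm)); first by rewrite size_slice //; lia.
  move=> t ht; rewrite /slice nth_drop nth_take; last by lia.
  rewrite {1}hI (nth_map 0) ?size_iota // nth_iota // add0n.
  by rewrite (fixpt_nth (n := (p + size I).+1)) // -/W; lia.
exists (p + size I), (take p W), (drop (p + size I) W).
by rewrite [X in _ = _ ++ X ++ _]EI catA -take_slice ?leq_addr // cat_take_drop.
Qed.
End FixedPoint.

Section GapLengths.
Local Open Scope nat_scope.

Lemma bounded_steps (f : nat -> nat) k c :
  (forall t, 1 <= t < k -> f t.+1 <= f t + c /\ f t <= f t.+1 + c) ->
  forall i j, 1 <= i <= k -> 1 <= j <= k -> f i <= f j + (k - 1) * c.
Proof.
move=> H.
have G t i : 1 <= i -> i + t <= k -> f (i + t) <= f i + t * c /\ f i <= f (i + t) + t * c.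
  elim: t => [|t IH] hi ht; first by rewrite addn0; lia.
  have [h1 h2] := IH hi ltac:(lia); have [g1 g2] := H (i + t) ltac:(lia).
  by rewrite addnS mulSn; lia.
move=> i j hi hj; have hk : `|i - j|%N * c <= (k - 1) * c by apply: leq_mul; lia.
case: (leqP i j) => hij.
  by have [_] := G (j - i) i ltac:(lia) ltac:(lia); rewrite subnKC //; lia.
by have [] := G (i - j) j ltac:(lia) ltac:(lia); rewrite subnKC; lia.
Qed.

Lemma size_flatten_le (T : Type) (a X : nat -> seq T) k M :
  (forall t, 1 <= t <= k -> size (a t) <= 1 /\ size (X t) <= M) ->
  size (flatten [seq a t ++ X t | t <- iota 1 k]) <= k + k * M.
Proof.
elim: k => [//|k IH] H; rewrite flatten_iotaS !size_cat mulSn.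
by have := IH (fun t ht => H t ltac:(lia)); have := H k.+1 ltac:(lia); lia.
Qed.

Lemma instance_gaps_long (T : Type) (k N c : nat) (a X : nat -> seq T) :
  (forall t, size (a t) <= 1) ->
  (forall t, 1 <= t < k ->
     size (X t.+1) <= size (X t) + c /\ size (X t) <= size (X t.+1) + c) ->
  k.+1 + k * (N - 2 + (k - 1) * c) <
    size (flatten [seq a i ++ X i | i <- iota 1 k] ++ a k.+1) ->
  forall i, 1 <= i <= k -> N.-1 <= size (X i).
Proof.
move=> ha hstep hsize i hi; rewrite leqNgt; apply/negP => hshort.
have hX t : 1 <= t <= k -> size (a t) <= 1 /\ size (X t) <= N - 2 + (k - 1) * c.
  by move=> ht; have := bounded_steps hstep ht hi; have := ha t; lia.
by move: hsize; rewrite size_cat; have := size_flatten_le hX; have := ha k.+1; lia.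
Qed.
End GapLengths.

Section Parikh.
Variable m : nat.
Implicit Types (u v w : seq 'I_m).

Lemma parikh_cat u v : parikh (u ++ v) = parikh u + parikh v.
Proof. by apply/rowP => j; rewrite !mxE count_cat PoszD. Qed.

Lemma parikh_morph (mu : 'I_m -> seq 'I_m) w :
  parikh (morph mu w) = parikh w *m freq_mx mu.
Proof.
have nil0 : parikh [::] = 0 :> 'rV[int]_m by apply/rowP => j; rewrite !mxE.
elim: w => [|c w IH]; first by rewrite /morph /= nil0 mul0mx.
rewrite /morph /= -/(morph mu w) parikh_cat IH -cat1s parikh_cat mulmxDl; congr (_ + _).
have -> : parikh [:: c] = delta_mx 0 c.
  by apply/rowP => j; rewrite !mxE /= addn0 eq_sym; case: (j == c).
by rewrite -rowE; apply/rowP => j; rewrite !mxE.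
Qed.

Lemma sum_parikh w : \sum_(j < m) parikh w 0 j = (size w)%:Z.
Proof.
elim: w => [|c w IH]; first by rewrite big1 // => j _; rewrite mxE.
rewrite -cat1s parikh_cat size_cat PoszD -IH.
under eq_bigr => j _ do rewrite mxE.
rewrite big_split /=; congr (_ + _).
rewrite (bigD1 c) //= big1 => [|j hj]; last by rewrite !mxE /= eq_sym (negbTE hj).
by rewrite !mxE /= eqxx addr0.
Qed.

Lemma size_parikh_diff u v (D : int) : (forall j, `|(parikh v - parikh u) 0 j| <= D) ->
  `|(size v)%:Z - (size u)%:Z| <= m%:Z * D.
Proof.
move=> hD; have hD' j : `|parikh v 0 j - parikh u 0 j| <= D by have := hD j; rewrite !mxE.
rewrite -!sum_parikh -sumrB.
apply: le_trans (ler_norm_sum _ _ _) _; apply: le_trans (ler_sum _ (fun j _ => hD' j)) _.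
by rewrite sumr_const card_ord -mulr_natl natz.
Qed.
End Parikh.

Section Delta.
Variables (R : realType) (m k : nat) (d : nat -> 'rV[int]_m).

Lemma Delta_ge0 : 0 <= Delta R k d.
Proof.
rewrite /Delta floor_ge0; elim/big_ind: _ => // [x y hx hy|t _]; last exact: sqrtr_ge0.
by rewrite le_max hx.
Qed.

Lemma Delta_entry i j : (1 <= i < k)%N -> `|d i 0 j| <= Delta R k d.
Proof.
move=> hi; set v := map_mx (fun z : int => z%:~R : R) (d i).
have hv : `|d i 0 j|%:~R <= vnorm v :> R.
  rewrite intr_norm; have -> : (d i 0 j)%:~R = v 0 j :> R by rewrite mxE.
  rewrite /vnorm -sqrtr_sqr ler_sqrt; last by apply: sumr_ge0 => t _; exact: sqr_ge0.
  by rewrite (bigD1 j) //= lerDl; apply: sumr_ge0 => t _; exact: sqr_ge0.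
rewrite /Delta -(intrKfloor (R := R) `|d i 0 j|); apply: le_floor; apply: le_trans hv _.
apply: (le_bigmax_seq (0 : R) i xpredT (fun i0 => vnorm (map_mx _ (d i0)))) => //.
by rewrite mem_index_iota.
Qed.

Lemma size_gap_step (X : nat -> seq 'I_m) :
  (forall i, (1 <= i)%N -> (i <= k.-1)%N -> parikh (X i.+1) - parikh (X i) = d i) ->
  forall t, (1 <= t < k)%N -> `|(size (X t.+1))%:Z - (size (X t))%:Z| <= m%:Z * Delta R k d.
Proof.
move=> hd t ht; apply: size_parikh_diff => j; rewrite hd; first exact: Delta_entry.
all: lia.
Qed.
End Delta.

Section Desubstitution.
Local Open Scope nat_scope.
Variables (m : nat) (mu : 'I_m -> seq 'I_m) (N : nat) (V : seq 'I_m).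
Hypothesis hlen : forall c, 1 < size (mu c).
Hypothesis hN : forall c, size (mu c) <= N.
Hypothesis hN0 : 0 < N.
Variable k : nat.
Hypothesis hk : 0 < k.
Variables (a : nat -> option 'I_m) (X : nat -> seq 'I_m) (d : nat -> 'rV[int]_m).
Hypothesis hd : forall i, 1 <= i -> i <= k.-1 -> (parikh (X i.+1) - parikh (X i))%R = d i.
Hypothesis hlong : forall i, 1 <= i <= k -> N.-1 <= size (X i).
Local Notation W := (morph mu V).
Local Notation B := (blockpos mu V).
Variables (s e : nat -> nat).
Hypothesis hletter : forall i, 1 <= i <= k.+1 -> s i <= e i /\ slice W (s i) (e i) = lw (a i).
Hypothesis hgap : forall i, 1 <= i <= k -> e i <= s i.+1 /\ slice W (e i) (s i.+1) = X i.
Hypothesis hend : e k.+1 <= size W.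
Hypothesis hspan : 3 <= e k.+1 - s 1.

Lemma letter_end_mono i j : 1 <= i -> i <= j <= k.+1 -> e i <= e j.
Proof.
move=> hi; elim: j => [|j IH] hj; first by lia.
case: (eqVneq i j.+1) => [-> //|hne].
by have := @hgap j ltac:(lia); have := @hletter j.+1 ltac:(lia); have := IH ltac:(lia); lia.
Qed.

Lemma letter_end_le_size i : 1 <= i <= k.+1 -> e i <= size W.
Proof. by move=> hi; apply: leq_trans hend; apply: letter_end_mono; lia. Qed.

Lemma letter_end i : 1 <= i <= k.+1 -> e i = s i + size (lw (a i)).
Proof.
move=> hi; have [h1 <-] := hletter hi.
by rewrite size_slice ?letter_end_le_size //; lia.
Qed.

Lemma gap_end i : 1 <= i <= k -> s i.+1 = e i + size (X i).
Proof.
move=> hi; have [h1 <-] := hgap hi.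
rewrite size_slice; first by lia.
by have := @hletter i.+1 ltac:(lia); have := @letter_end_le_size i.+1 ltac:(lia); lia.
Qed.

Section Covering.
Variables (c c' : nat -> nat).
Hypothesis hcover : forall i, 1 <= i <= k.+1 -> covers mu V (s i) (e i) (c i) (c' i).

Lemma cover_bounds i : 1 <= i <= k.+1 -> c i <= c' i <= (c i).+1 /\ c' i <= size V.
Proof. by move=> hi; apply: cover_le (hcover hi). Qed.

Lemma blocks_ordered i : 1 <= i <= k -> c' i <= c i.+1.
Proof.
move=> hi; apply: (cover_ordered hlen hN (hcover _) (hcover _) hN0); [lia|lia|].
by have := gap_end hi; have := hlong hi; lia.
Qed.

Definition parent_letter i := ohead (slice V (c i) (c' i)).
Definition parent_gap i := slice V (c' i) (c i.+1).
Definition letter_pre i := slice W (B (c i)) (s i).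
Definition letter_suf i := slice W (e i) (B (c' i)).
Definition parent_diff i := (parikh (parent_gap i.+1) - parikh (parent_gap i))%R.

Lemma lw_parent_letter i : 1 <= i <= k.+1 -> lw (parent_letter i) = slice V (c i) (c' i).
Proof.
by move=> hi; have [hc hV] := cover_bounds hi; rewrite lw_ohead // size_slice //; lia.
Qed.

Lemma morph_parent_letter i : 1 <= i <= k.+1 ->
  morph mu (lw (parent_letter i)) = letter_pre i ++ lw (a i) ++ letter_suf i.
Proof.
move=> hi; have [/andP [hc hc'] hV] := cover_bounds hi.
have [_ /andP [h1 h2] h3 _] := hcover hi; have [h4 <-] := hletter hi.
rewrite lw_parent_letter // slice_morph // slice_cat3 //.
by have := blockpos_le_size mu V (c' i); lia.
Qed.

Lemma blocks_increasing i j : 1 <= i < j -> j <= k.+1 -> c' i <= c j.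
Proof.
move=> hij; elim: j hij => [|j IH] hij hj; first by lia.
have := @blocks_ordered j; have := @cover_bounds j.
case: (eqVneq i j) => [<-|hne]; first by lia.
by have := IH ltac:(lia) ltac:(lia); lia.
Qed.

Lemma gap_image i : 1 <= i <= k ->
  X i = letter_suf i ++ morph mu (parent_gap i) ++ letter_pre i.+1.
Proof.
move=> hi; have [hei <-] := hgap hi.
have ord := blocks_ordered hi.
have [/andP [hc _] hV] := @cover_bounds i.+1 ltac:(lia).
have [_ _ h1 _] := @hcover i ltac:(lia).
have [_ /andP [h2 _] _ _] := @hcover i.+1 ltac:(lia).
have := blockpos_mono mu V ord; have := @hletter i.+1 ltac:(lia).
have := @letter_end_le_size i.+1 ltac:(lia).
by move=> *; rewrite /parent_gap slice_morph ?slice_cat3 //; lia.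
Qed.

Lemma parent_blocks : parent k mu a d parent_letter parent_diff.
Proof.
exists letter_pre, letter_suf; split=> i hi1 hi2; first by apply: morph_parent_letter; lia.
rewrite -hd // (gap_image (i := i)) ?(gap_image (i := i.+1)); try lia.
rewrite /parent_diff !parikh_cat !parikh_morph mulmxBl.
set y1 := parikh (parent_gap i) *m _; set y2 := parikh (parent_gap i.+1) *m _.
by apply/rowP => j; rewrite !mxE; ring.
Qed.

Lemma flatten_parent_blocks j : j <= k ->
  flatten [seq lw (parent_letter i) ++ parent_gap i | i <- iota 1 j] = slice V (c 1) (c j.+1).
Proof.
elim: j => [|j IH] hj; first by rewrite slice_nil.
have [/andP [h1 h2] h3] := @cover_bounds j.+1 ltac:(lia).
have h4 := @blocks_ordered j.+1 ltac:(lia).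
have [/andP [h5 _] h5'] := @cover_bounds j.+2 ltac:(lia).
have h6 : c 1 <= c j.+1.
  case: (posnP j) => [->//|hj0]; have := @blocks_increasing 1 j.+1 ltac:(lia) ltac:(lia).
  by have := @cover_bounds 1 ltac:(lia); lia.
rewrite flatten_iotaS IH ?lw_parent_letter /parent_gap ?slice_cat3 //; lia.
Qed.

Lemma size_desubstituted : 0 < size (slice V (c 1) (c' k.+1)) < e k.+1 - s 1.
Proof.
have [_ hV] := @cover_bounds k.+1 ltac:(lia).
rewrite size_slice //; apply: (cover_span hlen (@hcover 1 _) (@hcover k.+1 _)) hspan; try lia.
exact: blocks_increasing.
Qed.

Lemma instance_desubstituted :
  instance k parent_letter parent_diff (slice V (c 1) (c' k.+1)).
Proof.
have [/andP [h1 h2] h3] := @cover_bounds k.+1 ltac:(lia).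
split; first by rewrite -size_eq0 -lt0n (proj1 (andP size_desubstituted)).
exists parent_gap; split=> //.
rewrite flatten_parent_blocks ?lw_parent_letter ?slice_cat //; try lia.
have := @blocks_increasing 1 k.+1 ltac:(lia) ltac:(lia).
by have := @cover_bounds 1 ltac:(lia); lia.
Qed.
End Covering.

Lemma desubstitution : exists (A : nat -> option 'I_m) (D : nat -> 'rV[int]_m),
  parent k mu a d A D /\
  exists i j, [/\ j <= size V, instance k A D (slice V i j)
                 & size (slice V i j) < e k.+1 - s 1].
Proof.
have hcov i : exists cc, 1 <= i <= k.+1 -> covers mu V (s i) (e i) cc.1 cc.2.
  case: (boolP (1 <= i <= k.+1)) => hi; last by exists (0, 0).
  have [c [c' hc]] : exists c c', covers mu V (s i) (e i) c c'.
    apply: exists_cover; last exact: letter_end_le_size.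
    by have := letter_end hi; have := size_lw (a i); lia.
  by exists (c, c').
have [f hf] := choice hcov.
exists (parent_letter (fun i => (f i).1) (fun i => (f i).2)),
  (parent_diff (fun i => (f i).1) (fun i => (f i).2)).
split; first exact: parent_blocks.
exists (f 1).1, (f k.+1).2; split.
- by have [] := cover_le (hf k.+1 ltac:(lia)).
- exact: instance_desubstituted.
- by have /andP [] := size_desubstituted hf.
Qed.
End Desubstitution.

Lemma size_bound_nat (m N k Dn L : nat) : (0 < k)%N -> (2 <= N)%N ->
  L%:Z > N%:Z + k%:Z - 1 + (k%:Z - 1) * (N%:Z - 2 + m%:Z * k%:Z * Dn%:Z) ->
  (k.+1 + k * (N - 2 + (k - 1) * (m * Dn)) < L)%N /\ (3 <= L)%N.
Proof. move=> hk hN; nia. Qed.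

Theorem lemma5 (R : realType) (m : nat) (hm : (0 < m)%N)
  (mu : 'I_m -> seq 'I_m)
  (hmu1 : exists x : seq 'I_m, x != [::] /\ mu (letter1 hm) = letter1 hm :: x)
  (hlen : forall c : 'I_m, (1 < size (mu c))%N)
  (hunit : map_mx (fun z : int => z%:~R : R) (freq_mx mu) \in unitmx)
  (hnorm : opnorm (invmx (map_mx (fun z : int => z%:~R : R) (freq_mx mu))) < 1)
  (N : nat) (hN : N = \max_(c < m) size (mu c))
  (k : nat) (hk : (0 < k)%N)
  (a : nat -> option 'I_m) (d : nat -> 'rV[int]_m)
  (I : seq 'I_m)
  (hI : factor_of (fixpt hm mu) I)
  (hinst : instance k a d I)
  (hsize : (size I)%:Z >
     N%:Z + k%:Z - 1 + (k%:Z - 1) * (N%:Z - 2 + m%:Z * k%:Z * Delta R k d)) :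
  exists (A : nat -> option 'I_m) (D : nat -> 'rV[int]_m),
    parent k mu a d A D /\
    exists J : seq 'I_m,
      factor_of (fixpt hm mu) J /\ instance k A D J /\ (size J < size I)%N.
Proof.
have hNb c : (size (mu c) <= N)%N by rewrite hN; exact: (leq_bigmax c).
have hN2 : (2 <= N)%N by have := hNb (letter1 hm); have := hlen (letter1 hm); lia.
have hmu1' : exists x, mu (letter1 hm) = letter1 hm :: x by case: hmu1 => x [_ hx]; exists x.
have [Dn hDn] : exists Dn : nat, Delta R k d = Dn%:Z.
  by exists `|Delta R k d|%N; rewrite gez0_abs // Delta_ge0.
rewrite hDn in hsize; have [hsize' hI3] := size_bound_nat hk hN2 hsize.
case: hinst => hIne [X [hIeq hd]].
have hstep t : (1 <= t < k)%N ->
    (size (X t.+1) <= size (X t) + m * Dn /\ size (X t) <= size (X t.+1) + m * Dn)%N.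
  by move=> ht; have := size_gap_step R hd ht; rewrite hDn ler_norml => /andP [h1 h2]; lia.
rewrite hIeq in hsize'.
have hlong := instance_gaps_long (fun t => size_lw (a t)) hstep hsize'.
have [n [u [v hW]]] := factor_fixprefix hlen hmu1' hI.
have [s [e [hs1 he hlet hgap]]] := instance_positions u v hIeq.
rewrite -hW fixprefixS in hlet hgap.
have hend : (e k.+1 <= size (morph mu (fixprefix hm mu n)))%N.
  by rewrite -fixprefixS hW he !size_cat; lia.
have [A [D [hpar [i [j [hj hJ hJI]]]]]] :=
  desubstitution hlen hNb ltac:(lia) hk hd hlong hlet hgap hend ltac:(lia).
exists A, D; split=> //; exists (slice (fixprefix hm mu n) i j).
split; first exact: factor_slice.
by split=> //; move: hJI; rewrite he hs1; lia.
Qed.
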